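(* Let $m,q\ge1$, and let $r$ be a uniformly random seed. For any distributions $\mu_1,\dots,\mu_m\in\Delta_q$, $$\mathbb P_r\big[\exists i,j\in[m]:\ \mathrm{MinCoupler}(\mu_i,r)\ne\mathrm{MinCoupler}(\mu_j,r)\big]\le\frac{\sum_{x\in[q]}\big(\max_{i\in[m]}\mu_i(x)-\min_{i\in[m]}\mu_i(x)\big)}{\sum_{x\in[q]}\max_{i\in[m]}\mu_i(x)}.$$
   Context: $\Delta_q=\{\nu\in[0,1]^q:\sum_x\nu(x)=1\}$. The random seed $r$ is an infinite sequence of i.i.d. pairs $(x_1,p_1),(x_2,p_2),\dots$ with $x_k$ uniform on $[q]$ and $p_k$ uniform on $[0,1]$, independent. $\mathrm{MinCoupler}(\nu,r)$ outputs $x_{i^*}$, where $i^*=\min\{k\ge1: p_k\le\nu(x_k)\}$. *)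

From HB Require Import structures.
From mathcomp Require Import all_boot all_order all_algebra.
From mathcomp Require Import all_classical all_reals all_analysis.
Set Implicit Arguments. Unset Strict Implicit. Unset Printing Implicit Defensive.
Import Order.TTheory GRing.Theory Num.Theory.
Local Open Scope classical_set_scope.
Local Open Scope ring_scope.

Definition is_distr (R : realType) (q : nat) (nu : 'I_q -> R) : Prop :=
  (forall x, 0 <= nu x) /\ \sum_(x < q) nu x = 1.

(* The random seed r = (x_k, p_k)_k is modelled on a probability space (T,P)
   by random variables X k : T -> 'I_q and U k : T -> R (k = 0,1,2,...,
   index 0 playing the role of the paper's index 1).  [uniform_seed P X U]
   says that the events below are measurable and that the pairs (X k, U k)
   are i.i.d. with X k uniform on [q], U k uniform on [0,1], X k and U k
   independent: the finite-dimensional joint law on rectangles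
   {X k = xs k, U k <= a k}, k < n, is the product one. *)
Definition uniform_seed (R : realType) d (T : measurableType d)
  (P : probability T R) (q : nat) (X : nat -> T -> 'I_q) (U : nat -> T -> R)
  : Prop :=
  (forall k (x : 'I_q), measurable [set t | X k t = x]) /\
  (forall k (a : R), measurable [set t | U k t <= a]) /\
  (forall (n : nat) (xs : nat -> 'I_q) (a : nat -> R),
     (forall k, 0 <= a k <= 1) ->
     P [set t | forall k, (k < n)%N -> X k t = xs k /\ U k t <= a k]
     = (\prod_(k < n) (q%:R^-1 * a k))%:E).

(* MinCoupler(nu, r): output x_{i*} with i* the least k with p_k <= nu(x_k);
   None if no such k exists (a null event). *)
Definition MinCoupler (R : realType) (T : Type) (q : nat)
  (X : nat -> T -> 'I_q) (U : nat -> T -> R) (nu : 'I_q -> R) (t : T)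
  : option 'I_q :=
  match pselect (exists k, (fun k : nat => U k t <= nu (X k t)) k) with
  | left h => Some (X (ex_minn h) t)
  | right _ => None
  end.

(* max_i mu_i(x) (all values are nonnegative, so 0 is a neutral start). *)
Definition mumax (R : realType) (m q : nat) (mu : 'I_m -> 'I_q -> R)
  (x : 'I_q) : R := \big[Num.max/0]_(i < m) mu i x.

(* min_i mu_i(x) (the start value mumax x is >= every mu_i(x); m >= 1). *)
Definition mumin (R : realType) (m q : nat) (mu : 'I_m -> 'I_q -> R)
  (x : 'I_q) : R := \big[Num.min/mumax mu x]_(i < m) mu i x.

From HB Require Import structures.
From mathcomp Require Import all_boot all_order all_algebra.
From mathcomp Require Import all_classical all_reals all_analysis.
From mathcomp Require Import ring.
Import Order.TTheory GRing.Theory Num.Theory numFieldNormedType.Exports.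
Local Open Scope classical_set_scope.
Local Open Scope ring_scope.

(* Compare every coupler with the envelopes [min_i mu_i <= mu_i <= max_i mu_i].
   A round k is rejected by all couplers when p_k > max mu(x_k), and accepted
   by all of them, with the common output x_k, when p_k <= min mu(x_k).  So the
   couplers can disagree only if the first round not rejected by all of them
   is undecided, i.e. has min mu(x_k) < p_k <= max mu(x_k).  Rounds are i.i.d.,
   rejected with probability r = 1 - S/q and undecided with probability
   c = D/q, where S = sum_x max mu(x) and D = sum_x (max mu(x) - min mu(x)).
   Hence the disagreement probability is at most r^n + sum_(k<n) c r^k for
   every n, and in the limit c / (1 - r) = D / S. *)

Lemma bigsetU_exists (T : Type) (I : finType) (F : I -> set T) :
  \big[setU/set0]_(i : I) F i = [set t | exists i, F i t].
Proof.
rewrite -bigcup_seq; apply/seteqP; split=> t /=.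
  by case=> i _ Fit; exists i.
by case=> i Fit; exists i; rewrite //= mem_index_enum.
Qed.

Lemma ler_geometric_series_limit (R : realType) (x r c : R) : 0 <= r < 1 ->
  (forall n, x <= r ^+ n + series (geometric c r) n) -> x <= c / (1 - r).
Proof.
move=> /andP[r_ge0 r_lt1] x_le; have r_norm : `|r| < 1 by rewrite ger0_norm.
have lim : (fun n => r ^+ n + series (geometric c r) n) @ \oo --> c / (1 - r).
  by rewrite -[c / _]add0r; apply: cvgD; [exact: cvg_expr|exact: cvg_geometric_series].
by apply: cvgr_to_ge lim _; apply: nearW.
Qed.

Lemma ltnS_neq (j i : nat) : j != i -> (j < i.+1)%N = (j < i)%N.
Proof. by move=> ji; rewrite ltnS leq_eqVlt (negPf ji). Qed.

Section seed.
Variables (R : realType) (d : measure_display) (T : measurableType d).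
Variables (P : probability T R) (q : nat) (X : nat -> T -> 'I_q) (U : nat -> T -> R).

Lemma MinCoupler_SomeP (nu : 'I_q -> R) t x :
  MinCoupler X U nu t = Some x <->
  exists k, [/\ U k t <= nu (X k t),
                forall j, (j < k)%N -> nu (X j t) < U j t & X k t = x].
Proof.
rewrite /MinCoupler; case: pselect => [ex|nex]; last first.
  by split=> // -[k [Uk _ _]]; case: nex; exists k.
case: ex_minnP => k Uk k_min; split=> [[<-]|[k' [Uk' k'_min <-]]].
  exists k; split=> // j jk; rewrite ltNge; apply: contraL jk => /k_min.
  by rewrite -leqNgt.
suff -> : k = k' by [].
apply/eqP; rewrite eqn_leq k_min // leqNgt; apply/negP => /k'_min.
by rewrite ltNge Uk.
Qed.

Definition disagreement {I : Type} (nu : I -> 'I_q -> R) : set T :=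
  [set t | exists i j, MinCoupler X U (nu i) t <> MinCoupler X U (nu j) t].

Hypothesis seedP : uniform_seed P X U.

Lemma measurable_U_le k (f : 'I_q -> R) : measurable [set t | U k t <= f (X k t)].
Proof.
have [mX [mU _]] := seedP.
have -> : [set t | U k t <= f (X k t)] =
    \bigcup_x ([set t | X k t = x] `&` [set t | U k t <= f x]).
  by apply/seteqP; split=> t /=; [exists (X k t)|case=> x _ [->]].
by apply: fin_bigcup_measurable finite_finset _ => x _; apply: measurableI.
Qed.

Lemma measurable_MinCoupler_Some (nu : 'I_q -> R) x :
  measurable [set t | MinCoupler X U nu t = Some x].
Proof.
have [mX _] := seedP.
have -> : [set t | MinCoupler X U nu t = Some x] =
    \bigcup_k ([set t | U k t <= nu (X k t)] `&`
      \bigcap_(j in `I_k) ~` [set t | U j t <= nu (X j t)] `&` [set t | X k t = x]).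
  apply/seteqP; split=> t.
    move/MinCoupler_SomeP => [k [Uk k_min Xk]]; exists k => //.
    by split=> //; split=> // j /k_min; rewrite ltNge => /negP.
  case=> k _ [[Uk k_min] Xk]; apply/MinCoupler_SomeP; exists k.
  by split=> // j /k_min /negP; rewrite ltNge.
apply: bigcupT_measurable => k; apply: measurableI => //.
apply: measurableI; first exact: measurable_U_le.
apply: fin_bigcap_measurable (finite_II k) _ => j _.
by apply: measurableC; exact: measurable_U_le.
Qed.

Lemma measurable_disagreement (I : finType) (nu : I -> 'I_q -> R) :
  measurable (disagreement nu).
Proof.
have -> : disagreement nu =
    \bigcup_(ijx : I * I * 'I_q)
      ([set t | MinCoupler X U (nu ijx.1.1) t = Some ijx.2] `\`
       [set t | MinCoupler X U (nu ijx.1.2) t = Some ijx.2]).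
  apply/seteqP; split=> t.
    move=> [i [j]]; case Ei: (MinCoupler X U (nu i) t) => [x|] nu_ij.
      by exists (i, j, x) => //; split=> // /esym.
    case Ej: (MinCoupler X U (nu j) t) nu_ij => [y|] // _.
    by exists (j, i, y) => //; split=> //; rewrite mksetE /= Ei.
  case=> -[[i j] x] _ [Ei Ej]; exists i, j => Eij; apply: Ej.
  by rewrite mksetE /= -Eij.
apply: fin_bigcup_measurable finite_finset _ => ijx _.
by apply: measurableD; exact: measurable_MinCoupler_Some.
Qed.

(* Rounds [j < i] are constrained to a window [a_j(x_j) < p_j <= b_j(x_j)],
   later rounds to [x_j = xs_j /\ p_j <= b_j(xs_j)]: for [i = 0] this is the
   rectangle of [uniform_seed], and raising [i] opens one window at a time. *)
Definition seed_event (i n : nat) (xs : nat -> 'I_q) (a b : nat -> 'I_q -> R) :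
  set T :=
  [set t | forall j, (j < n)%N ->
     if (j < i)%N then (a j (X j t) < U j t <= b j (X j t) : Prop)
     else X j t = xs j /\ U j t <= b j (xs j)].

Definition seed_weight (i n : nat) (xs : nat -> 'I_q) (a b : nat -> 'I_q -> R) :
  R :=
  \prod_(j < n) (q%:R^-1 *
     (if (j < i)%N then \sum_(x < q) (b j x - a j x) else b j (xs j))).

Lemma measurable_seed_event i n xs a b : measurable (seed_event i n xs a b).
Proof.
have [mX [mU _]] := seedP.
have -> : seed_event i n xs a b = \bigcap_(j in `I_n)
    (if (j < i)%N then
       ~` [set t | U j t <= a j (X j t)] `&` [set t | U j t <= b j (X j t)]
     else [set t | X j t = xs j] `&` [set t | U j t <= b j (xs j)]).
  apply/seteqP; split=> t Et j /Et; case: ifP => // _ /=.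
    by rewrite ltNge => /andP[/negP].
  by case=> /negP; rewrite -ltNge => -> ->.
apply: fin_bigcap_measurable (finite_II n) _ => j _; case: ifP => _.
  by apply: measurableI; [apply: measurableC|]; exact: measurable_U_le.
exact: measurableI.
Qed.

Lemma seed_event_succ i n xs a b : (i < n)%N ->
  seed_event i.+1 n xs a b = \big[setU/set0]_(x < q)
    (seed_event i n [eta xs with i |-> x] a b `\`
     seed_event i n [eta xs with i |-> x] a [eta b with i |-> a i]).
Proof.
move=> i_lt_n; rewrite bigsetU_exists; apply/seteqP; split=> t Et.
  exists (X i t); split.
    move=> j jn; have := Et j jn; have [->|ji] := eqVneq j i.
      by rewrite ltnSn ltnn /= eqxx => /andP[_ ->].
    by rewrite ltnS_neq //= (negPf ji).
  move=> Et'; have := Et' i i_lt_n; rewrite ltnn /= !eqxx => -[_].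
  by have := Et i i_lt_n; rewrite ltnSn => /andP[+ _]; rewrite ltNge => /negP.
case: Et => x [Ex not_Ex] j jn; have := Ex j jn; have [->|ji] := eqVneq j i.
  rewrite ltnSn ltnn /= eqxx => -[<- Ub]; rewrite Ub andbT ltNge.
  apply/negP => Ua; apply: not_Ex => k kn; have := Ex k kn.
  have [->|ki] := eqVneq k i.
    by rewrite ltnn /= !eqxx => -[Xx _]; rewrite -Xx.
  by rewrite /= (negPf ki).
by rewrite ltnS_neq //= (negPf ji).
Qed.

Lemma seed_weight_succ i n xs a b : (i < n)%N ->
  seed_weight i.+1 n xs a b = \sum_(x < q)
    (seed_weight i n [eta xs with i |-> x] a b -
     seed_weight i n [eta xs with i |-> x] a [eta b with i |-> a i]).
Proof.
move=> i_lt_n; pose i0 := Ordinal i_lt_n.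
have val_neq (j : 'I_n) : j != i0 -> (j : nat) != i.
  by apply: contra => /eqP ji; apply/eqP/val_inj.
pose rest := \prod_(j < n | j != i0) (q%:R^-1 *
  (if (j < i)%N then \sum_(x < q) (b j x - a j x) else b j (xs j))).
have split_i (xs' : nat -> 'I_q) (b' : nat -> 'I_q -> R) :
    (forall j, j != i -> xs' j = xs j /\ b' j = b j) ->
    seed_weight i n xs' a b' = q%:R^-1 * b' i (xs' i) * rest.
  move=> off_i; rewrite /seed_weight (bigD1 i0) //= ltnn; congr (_ * _).
  by apply: eq_bigr => j /val_neq /off_i [-> ->].
have -> : seed_weight i.+1 n xs a b =
    q%:R^-1 * (\sum_(x < q) (b i x - a i x)) * rest.
  rewrite /seed_weight (bigD1 i0) //= ltnSn; congr (_ * _).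
  by apply: eq_bigr => j /val_neq ji; rewrite ltnS_neq.
rewrite mulr_sumr big_distrl; apply: eq_bigr => x _.
rewrite !split_i /= ?eqxx; first by ring.
all: by move=> j ji /=; rewrite (negPf ji).
Qed.

Lemma seed_event_prob i n xs a b : (i <= n)%N ->
  (forall j x, 0 <= a j x <= b j x) -> (forall j x, b j x <= 1) ->
  P (seed_event i n xs a b) = (seed_weight i n xs a b)%:E.
Proof.
elim: i xs b => [|i IH] xs b i_le_n ab b_le1.
  have -> : seed_event 0 n xs a b =
      [set t | forall k, (k < n)%N -> X k t = xs k /\ U k t <= b k (xs k)] by [].
  rewrite seedP.2.2; last first.
    by move=> k; have /andP[a0 ab'] := ab k (xs k); rewrite (le_trans a0 ab') b_le1.
  by congr EFin; apply: eq_bigr.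
have b'_le_b j x : [eta b with i |-> a i] j x <= b j x.
  by rewrite /=; case: eqP => [->|_]; [case/andP: (ab i x)|].
have ab' j x : 0 <= a j x <= [eta b with i |-> a i] j x.
  by rewrite /=; case: eqP => [->|_]; [rewrite lexx andbT; case/andP: (ab i x)|].
have b'_le1 j x : [eta b with i |-> a i] j x <= 1 := le_trans (b'_le_b j x) (b_le1 j x).
rewrite seed_event_succ // measure_bigsetU_ord; last 2 first.
- by move=> x; apply: measurableD; exact: measurable_seed_event.
- move=> x y _ _ [t [[Ex _] [Ey _]]].
  have := Ex i i_le_n; have := Ey i i_le_n; rewrite ltnn /= !eqxx.
  by move=> [<- _] [].
rewrite seed_weight_succ // -sumEFin; apply: eq_bigr => x _.
rewrite measureD; [|exact: measurable_seed_event..|]; last first.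
  by rewrite (le_lt_trans (probability_le1 _ (measurable_seed_event _ _ _ _ _))) ?ltry.
rewrite setIidr; first by rewrite EFinB -!IH // ltnW.
move=> t Et j jn; have := Et j jn; case: ifP => _ /=.
  by move=> /andP[-> Ub]; rewrite (le_trans Ub (b'_le_b _ _)).
by case=> -> Ub; split=> //; rewrite (le_trans Ub (b'_le_b _ _)).
Qed.

Definition window_event (n : nat) (a b : nat -> 'I_q -> R) : set T :=
  [set t | forall j, (j < n)%N -> a j (X j t) < U j t <= b j (X j t)].

Lemma window_seed_eventE n a b (x0 : 'I_q) :
  window_event n a b = seed_event n n (fun=> x0) a b.
Proof. by apply/seteqP; split=> t Et j jn; have := Et j jn; rewrite /= jn. Qed.

Lemma measurable_window_event n a b : (0 < q)%N -> measurable (window_event n a b).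
Proof.
move=> q_gt0; rewrite (window_seed_eventE _ _ _ (Ordinal q_gt0)).
exact: measurable_seed_event.
Qed.

Lemma window_event_prob n a b : (0 < q)%N ->
  (forall j x, 0 <= a j x <= b j x) -> (forall j x, b j x <= 1) ->
  P (window_event n a b) =
  (\prod_(j < n) (q%:R^-1 * \sum_(x < q) (b j x - a j x)))%:E.
Proof.
move=> q_gt0 ab b_le1; rewrite (window_seed_eventE _ _ _ (Ordinal q_gt0)).
by rewrite seed_event_prob //; congr EFin; apply: eq_bigr => j _; rewrite ltn_ord.
Qed.

Section envelope.
Variables (L H : 'I_q -> R).
Hypotheses (L_ge0 : forall x, 0 <= L x) (L_le_H : forall x, L x <= H x).
Hypotheses (H_le1 : forall x, H x <= 1) (q_gt0 : (0 < q)%N).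

Let rejection_rate := q%:R^-1 * \sum_(x < q) (1 - H x).
Let undecided_rate := q%:R^-1 * \sum_(x < q) (H x - L x).

Let unit_seed n := window_event n (fun _ _ => 0) (fun _ _ => 1).
Let all_rejected n := window_event n (fun=> H) (fun _ _ => 1).
Let first_undecided k := window_event k.+1
  (fun j => if (j < k)%N then H else L) (fun j => if (j < k)%N then fun=> 1 else H).

Lemma prob_unit_seed n : P (unit_seed n) = 1%:E.
Proof.
rewrite window_event_prob //; last by move=> *; rewrite lexx ler01.
congr EFin; rewrite big1 // => j _.
by rewrite subr0 sumr_const card_ord mulVf // pnatr_eq0 -lt0n.
Qed.

Lemma prob_all_rejected n : P (all_rejected n) = (rejection_rate ^+ n)%:E.
Proof.
rewrite window_event_prob //; first by rewrite prodr_const card_ord.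
by move=> j x; rewrite (le_trans (L_ge0 x) (L_le_H x)) H_le1.
Qed.

Lemma prob_first_undecided k :
  P (first_undecided k) = (geometric undecided_rate rejection_rate k)%:E.
Proof.
rewrite window_event_prob //; last 2 first.
- by move=> j x; case: ifP => _;
    rewrite ?L_ge0 ?L_le_H ?H_le1 ?(le_trans (L_ge0 x) (L_le_H x)).
- by move=> j x; case: ifP.
rewrite big_ord_recr /= ltnn mulrC; congr (_ * _)%:E.
by rewrite -[in RHS](card_ord k) -prodr_const; apply: eq_bigr => j _; rewrite ltn_ord.
Qed.

Lemma disagreement_cover (I : Type) (nu : I -> 'I_q -> R) n :
  (forall i x, L x <= nu i x <= H x) ->
  disagreement nu `<=`
  ~` unit_seed n `|` (all_rejected n `|` \big[setU/set0]_(k < n) first_undecided k).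
Proof.
move=> nu_env t [i [j nu_ij]].
have [Wt|] := pselect (unit_seed n t); last by left.
have U_le1 k : (k < n)%N -> U k t <= 1 by move=> kn; case/andP: (Wt k kn).
right; have [ex|none] := pselect (exists k, (k < n)%N && (U k t <= H (X k t))).
  right; case: (ex_minnP ex) => k /andP[kn Uk] k_min.
  have before_k l : (l < k)%N -> H (X l t) < U l t.
    move=> lk; rewrite ltNge; apply/negP => Ul.
    by have := k_min l; rewrite (ltn_trans lk kn) Ul leqNgt lk => /(_ isT).
  apply: (bigsetU_sup kn) => l; rewrite ltnS leq_eqVlt.
  have [->|lk] /= := eqVneq l k; last first.
    by move=> lk'; rewrite lk' before_k // U_le1 // (ltn_trans lk' kn).
  rewrite ltnn Uk andbT ltNge => _; apply/negP => Uk_le_L.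
  have all_Some (i' : I) : MinCoupler X U (nu i') t = Some (X k t).
    apply/MinCoupler_SomeP; exists k; split=> //.
      by case/andP: (nu_env i' (X k t)) => + _; exact: le_trans Uk_le_L.
    move=> h hk; case/andP: (nu_env i' (X h t)) => _ nuH.
    exact: le_lt_trans nuH (before_k h hk).
  by apply: nu_ij; rewrite !all_Some.
left=> k kn; rewrite U_le1 // andbT ltNge; apply/negP => Uk.
by apply: none; exists k; rewrite kn.
Qed.

Lemma disagreement_le_geometric (I : finType) (nu : I -> 'I_q -> R) n :
  (forall i x, L x <= nu i x <= H x) ->
  (P (disagreement nu) <=
   (rejection_rate ^+ n + series (geometric undecided_rate rejection_rate) n)%:E)%E.
Proof.
move=> nu_env; have mW := measurable_window_event _ _ _ q_gt0.
have mG : measurable (\big[setU/set0]_(k < n) first_undecided k).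
  by apply: bigsetU_measurable => k _; exact: mW.
have mU : measurable (unit_seed n) by exact: mW.
have mR : measurable (all_rejected n) by exact: mW.
(* Library bounds restated for [P] itself: instantiated directly they mention
   [P] through the measure coercion, which [rewrite] below would not match. *)
have P_setU (A B : set T) : measurable A -> measurable B ->
    (P (A `|` B) <= P A + P B)%E.
  exact: measureU2.
have P_bigsetU : (P (\big[setU/set0]_(k < n) first_undecided k) <=
    \sum_(k < n) P (first_undecided k))%E.
  by apply: content_subadditive => // k _; exact: mW.
have P_cover : (P (disagreement nu) <= P (~` unit_seed n `|`
    (all_rejected n `|` \big[setU/set0]_(k < n) first_undecided k)))%E.
  apply: le_measure; last exact: disagreement_cover.
  - by rewrite inE; exact: measurable_disagreement.
  - by rewrite inE; apply: measurableU; [apply: measurableC|apply: measurableU].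
apply: (le_trans P_cover); apply: (le_trans (P_setU _ _ _ _)).
- exact: measurableC.
- exact: measurableU.
rewrite probability_setC // prob_unit_seed subee // add0e.
apply: (le_trans (P_setU _ _ mR mG)).
rewrite prob_all_rejected EFinD leeD2l // seriesEord /= -sumEFin.
apply: (le_trans P_bigsetU).
by apply: lee_sum => k _; rewrite prob_first_undecided.
Qed.

Lemma MinCoupler_disagreement_le (I : finType) (nu : I -> 'I_q -> R) :
  (forall i x, L x <= nu i x <= H x) -> 0 < \sum_(x < q) H x ->
  (P (disagreement nu) <=
   ((\sum_(x < q) (H x - L x)) / \sum_(x < q) H x)%:E)%E.
Proof.
move=> nu_env S_gt0.
have q_neq0 : q%:R != 0 :> R by rewrite pnatr_eq0 -lt0n.
have accept_rate : 1 - rejection_rate = q%:R^-1 * \sum_(x < q) H x.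
  by rewrite /rejection_rate sumrB sumr_const card_ord mulrBr mulVf //; ring.
have rate_ge0 : 0 <= rejection_rate.
  by rewrite mulr_ge0 ?invr_ge0 ?ler0n // sumr_ge0 // => x _; rewrite subr_ge0.
have rate_lt1 : rejection_rate < 1.
  by rewrite -subr_gt0 accept_rate mulr_gt0 // invr_gt0 ltr0n.
have fin : P (disagreement nu) \is a fin_num.
  rewrite ge0_fin_numE // (le_lt_trans (probability_le1 _ _)) ?ltry //.
  exact: measurable_disagreement.
rewrite -(fineK fin) lee_fin.
have -> : (\sum_(x < q) (H x - L x)) / \sum_(x < q) H x =
    undecided_rate / (1 - rejection_rate).
  by rewrite accept_rate /undecided_rate; field; rewrite q_neq0 lt0r_neq0.
apply: ler_geometric_series_limit; first by rewrite rate_ge0.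
by move=> n; rewrite -lee_fin fineK // disagreement_le_geometric.
Qed.

End envelope.

End seed.

Lemma le_mumax {R : realType} {m q : nat} (mu : 'I_m -> 'I_q -> R) i x :
  mu i x <= mumax mu x.
Proof. exact: le_bigmax. Qed.

Lemma mumin_le {R : realType} {m q : nat} (mu : 'I_m -> 'I_q -> R) i x :
  mumin mu x <= mu i x.
Proof. exact: bigmin_le. Qed.

Lemma mumin_ge0 {R : realType} {m q : nat} (mu : 'I_m -> 'I_q -> R) x :
  (forall i, 0 <= mu i x) -> 0 <= mumin mu x.
Proof. by move=> mu_ge0; apply/bigmin_geP; split=> //; exact: bigmax_ge_id. Qed.

Lemma mumax_le1 {R : realType} {m q : nat} (mu : 'I_m -> 'I_q -> R) x :
  (forall i, mu i x <= 1) -> mumax mu x <= 1.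
Proof. by move=> mu_le1; apply/bigmax_leP; split=> //; exact: ler01. Qed.

Lemma distr_le1 {R : realType} {q : nat} (nu : 'I_q -> R) x : is_distr nu -> nu x <= 1.
Proof. by case=> nu_ge0 <-; rewrite (bigD1 x) //= lerDl sumr_ge0. Qed.

Theorem lemma2p9 (R : realType) (d : measure_display) (T : measurableType d)
  (P : probability T R) (m q : nat) (X : nat -> T -> 'I_q) (U : nat -> T -> R)
  (mu : 'I_m -> 'I_q -> R) :
  (0 < m)%N -> (0 < q)%N ->
  uniform_seed P X U ->
  (forall i, is_distr (mu i)) ->
  (P [set t | exists i j : 'I_m,
        MinCoupler X U (mu i) t <> MinCoupler X U (mu j) t]
   <= ((\sum_(x < q) (mumax mu x - mumin mu x)) /
       (\sum_(x < q) mumax mu x))%:E)%E.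
Proof.
move=> m_gt0 q_gt0 seedP mu_distr; pose i0 : 'I_m := Ordinal m_gt0.
apply: MinCoupler_disagreement_le => //.
- by move=> x; apply: mumin_ge0 => i; exact: (mu_distr i).1.
- by move=> x; exact: le_trans (mumin_le mu i0 x) (le_mumax mu i0 x).
- by move=> x; apply: mumax_le1 => i; exact: distr_le1.
- by move=> i x; rewrite mumin_le le_mumax.
rewrite (lt_le_trans ltr01) // -(mu_distr i0).2.
by apply: ler_sum => x _; exact: le_mumax.
Qed.
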